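(* Consider the delay differential system \[ \begin{aligned} \dot T(t)&= s-dT(t)+aT(t)\Big(1-\frac{T(t)+I(t)}{T_{\max}}\Big)-\frac{bT(t)V(t)}{1+\alpha V(t)},\\ \dot I(t)&= \frac{bT(t-\tau)V(t-\tau)}{1+\alpha V(t-\tau)}+aI(t)\Big(1-\frac{T(t)+I(t)}{T_{\max}}\Big)-\mu I(t),\\ \dot V(t)&= pI(t)-cV(t), \end{aligned} \] with positive constants $s,d,a,T_{\max},b,\alpha,\mu,p,c$ satisfying $d\le\mu$, and $\tau\ge0$. Then there exist $M_I,M_V>0$ such that every positive solution $(T(t),I(t),V(t))$ satisfies $I(t)<M_I$ and $V(t)<M_V$ for all sufficiently large $t$.
   Context: A positive solution is one with $T,I,V>0$. *)

From Stdlib Require Import Reals.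
Open Scope R_scope.

Definition infect (b alpha Tv Vv : R) : R := b * Tv * Vv / (1 + alpha * Vv).

Definition positive_solution (s d a Tmax b alpha mu p c tau : R)
    (T I V : R -> R) : Prop :=
  (forall t, -tau <= t -> 0 < T t /\ 0 < I t /\ 0 < V t) /\
  (forall t, 0 < t ->
     derivable_pt_lim T t
       (s - d * T t + a * T t * (1 - (T t + I t) / Tmax)
          - infect b alpha (T t) (V t)) /\
     derivable_pt_lim I t
       (infect b alpha (T (t - tau)) (V (t - tau))
          + a * I t * (1 - (T t + I t) / Tmax) - mu * I t) /\
     derivable_pt_lim V t (p * I t - c * V t)).

(* Along a positive solution, the delayed total population W(t) = T(t - tau) + I(t)
   loses the infection terms: the incidence leaving T at time t - tau is exactly
   the one entering I at time t.  Each logistic term a X (1 - (X + Z)/Tmax) is at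
   most a Tmax / 4, and d <= mu, so W' <= s + a Tmax / 2 - d W.  Comparison with
   the linear equation bounds W, hence I, eventually; then V' <= p M_I - c V
   bounds V in the same way. *)

From Stdlib Require Import Reals Lra Psatz.
Open Scope R_scope.

Lemma logistic_term_le (a Tmax X Z : R) :
  0 < a -> 0 < Tmax -> 0 <= X -> 0 <= Z ->
  a * X * (1 - (X + Z) / Tmax) <= a * Tmax / 4.
Proof.
  intros Ha HT HX HZ.
  assert (E : a * X * (1 - (X + Z) / Tmax) =
    a * Tmax / 4 - a * ((X - Tmax / 2) * (X - Tmax / 2)) / Tmax - a * X * Z / Tmax)
    by (field; lra).
  rewrite E.
  assert (0 <= a * ((X - Tmax / 2) * (X - Tmax / 2)) / Tmax).
  { apply Rle_mult_inv_pos; [|lra].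
    apply Rmult_le_pos; [lra | apply Rle_0_sqr]. }
  assert (0 <= a * X * Z / Tmax).
  { apply Rle_mult_inv_pos; [|lra].
    apply Rmult_le_pos; [apply Rmult_le_pos|]; lra. }
  lra.
Qed.

Section LinearComparison.

Variables (y y' : R -> R) (t1 A k : R).
Hypothesis y_deriv : forall t, t1 < t -> derivable_pt_lim y t (y' t).
Hypothesis y'_le : forall t, t1 < t -> y' t <= A - k * y t.

(* [(y - A/k) e^(k t)] has derivative [(y' - (A - k y)) e^(k t) <= 0]. *)
Lemma exp_weighted_gap_nonincreasing : k <> 0 ->
  forall u t, t1 < u <= t ->
  (y t - A / k) * exp (k * t) <= (y u - A / k) * exp (k * u).
Proof.
  intros Hk u t [Hu Hut].
  set (z := fun t => (y t - A / k) * exp (k * t)).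
  set (z' := fun t => y' t * exp (k * t) + (y t - A / k) * (k * exp (k * t))).
  assert (z_deriv : forall t, t1 < t -> derivable_pt_lim z t (z' t)).
  { intros x Hx. unfold z, z'.
    apply (derivable_pt_lim_mult (fun t => y t - A / k) (fun t => exp (k * t))).
    - replace (y' x) with (y' x - 0) by ring.
      apply derivable_pt_lim_minus; [now apply y_deriv | apply derivable_pt_lim_const].
    - replace (k * exp (k * x)) with (exp (k * x) * (k * 1)) by ring.
      apply (derivable_pt_lim_comp (fun t => k * t) exp).
      + apply derivable_pt_lim_scal, derivable_pt_lim_id.
      + apply derivable_pt_lim_exp. }
  assert (z'_nonpos : forall t, t1 < t -> z' t <= 0).
  { intros x Hx. unfold z'.
    replace (y' x * exp (k * x) + (y x - A / k) * (k * exp (k * x)))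
      with ((y' x - (A - k * y x)) * exp (k * x)) by (field; exact Hk).
    pose proof (y'_le x Hx). pose proof (exp_pos (k * x)). nra. }
  fold (z t) (z u).
  destruct (Rle_lt_or_eq_dec _ _ Hut) as [Hlt | ->]; [|lra].
  destruct (MVT_cor2 z z' u t Hlt) as [x [Hzx Hx]].
  - intros x Hx. apply z_deriv. lra.
  - pose proof (z'_nonpos x ltac:(lra)). nra.
Qed.

Lemma eventually_lt_of_deriv_le_affine : 0 < k ->
  forall eps, 0 < eps -> exists t0, forall t, t0 <= t -> y t < A / k + eps.
Proof.
  intros Hk eps Heps.
  set (C := (y (t1 + 1) - A / k) * exp (k * (t1 + 1))).
  exists (Rmax (t1 + 1) (Rabs C / (k * eps))).
  intros t Ht.
  pose proof (Rmax_l (t1 + 1) (Rabs C / (k * eps))).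
  pose proof (Rmax_r (t1 + 1) (Rabs C / (k * eps))).
  assert (Hgap : (y t - A / k) * exp (k * t) <= C).
  { apply exp_weighted_gap_nonincreasing; lra. }
  assert (HC : Rabs C <= k * eps * t).
  { replace (Rabs C) with (k * eps * (Rabs C / (k * eps))) by (field; lra).
    apply Rmult_le_compat_l; nra. }
  pose proof (exp_ineq1_le (k * t)).
  pose proof (exp_pos (k * t)).
  pose proof (Rle_abs C).
  assert (y t - A / k < eps); [|lra].
  apply (Rmult_lt_reg_r (exp (k * t))); nra.
Qed.

End LinearComparison.

Section PositiveSolution.

Variables (s d a Tmax b alpha mu p c tau : R) (T I V : R -> R).
Hypotheses (Hd : 0 < d) (Ha : 0 < a) (HT : 0 < Tmax) (Hdmu : d <= mu)
  (Htau : 0 <= tau).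
Hypothesis sol : positive_solution s d a Tmax b alpha mu p c tau T I V.

Definition delayed_total (t : R) : R := T (t - tau) + I t.

Definition delayed_total_rate (t : R) : R :=
  (s - d * T (t - tau)
     + a * T (t - tau) * (1 - (T (t - tau) + I (t - tau)) / Tmax)
     - infect b alpha (T (t - tau)) (V (t - tau)))
  + (infect b alpha (T (t - tau)) (V (t - tau))
     + a * I t * (1 - (T t + I t) / Tmax) - mu * I t).

Lemma delayed_total_deriv (t : R) : tau < t ->
  derivable_pt_lim delayed_total t (delayed_total_rate t).
Proof.
  intros Ht. destruct sol as [_ Hder].
  destruct (Hder (t - tau)) as [HdT _]; [lra|].
  destruct (Hder t) as [_ [HdI _]]; [lra|].
  apply (derivable_pt_lim_plus (fun t => T (t - tau)) I); [|exact HdI].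
  set (rateT := _ - infect _ _ _ _).
  replace rateT with (rateT * (1 - 0)) by ring.
  apply (derivable_pt_lim_comp (fun t => t - tau) T); [|exact HdT].
  apply derivable_pt_lim_minus; [apply derivable_pt_lim_id | apply derivable_pt_lim_const].
Qed.

Lemma delayed_total_rate_le (t : R) : tau < t ->
  delayed_total_rate t <= (s + a * Tmax / 2) - d * delayed_total t.
Proof.
  intros Ht. destruct sol as [Hpos _].
  destruct (Hpos (t - tau)) as [PT [PI _]]; [lra|].
  destruct (Hpos t) as [QT [QI _]]; [lra|].
  pose proof (logistic_term_le a Tmax (T (t - tau)) (I (t - tau)) Ha HT
    ltac:(lra) ltac:(lra)).
  pose proof (logistic_term_le a Tmax (I t) (T t) Ha HT ltac:(lra) ltac:(lra)).
  unfold delayed_total_rate, delayed_total.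
  rewrite (Rplus_comm (T t) (I t)).
  nra.
Qed.

Lemma infected_eventually_lt :
  exists t0, forall t, t0 <= t -> I t < (s + a * Tmax / 2) / d + 1.
Proof.
  destruct (eventually_lt_of_deriv_le_affine delayed_total delayed_total_rate
    tau (s + a * Tmax / 2) d delayed_total_deriv delayed_total_rate_le Hd 1 Rlt_0_1)
    as [t0 Ht0].
  exists (Rmax t0 tau). intros t Ht.
  pose proof (Rmax_l t0 tau). pose proof (Rmax_r t0 tau).
  pose proof (Ht0 t ltac:(lra)).
  destruct sol as [Hpos _].
  destruct (Hpos (t - tau)) as [PT _]; [lra|].
  unfold delayed_total in *. lra.
Qed.

Lemma virus_eventually_lt (MI t1 : R) : 0 < c -> 0 < p ->
  (forall t, t1 <= t -> I t < MI) ->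
  exists t0, forall t, t0 <= t -> V t < p * MI / c + 1.
Proof.
  intros Hc Hp HI. destruct sol as [_ Hder].
  apply (eventually_lt_of_deriv_le_affine V (fun t => p * I t - c * V t)
    (Rmax t1 0) (p * MI) c); [| | exact Hc | exact Rlt_0_1].
  - intros t Ht. apply Hder. pose proof (Rmax_r t1 0). lra.
  - intros t Ht. pose proof (Rmax_l t1 0). pose proof (HI t ltac:(lra)). nra.
Qed.

End PositiveSolution.

Theorem theorem6 (s d a Tmax b alpha mu p c tau : R) :
  0 < s -> 0 < d -> 0 < a -> 0 < Tmax -> 0 < b -> 0 < alpha ->
  0 < mu -> 0 < p -> 0 < c -> d <= mu -> 0 <= tau ->
  exists MI MV : R, 0 < MI /\ 0 < MV /\
    forall T I V : R -> R,
      positive_solution s d a Tmax b alpha mu p c tau T I V ->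
      exists t0 : R, forall t, t0 <= t -> I t < MI /\ V t < MV.
Proof.
  intros Hs Hd Ha HT Hb Hal Hmu Hp Hc Hdmu Htau.
  set (MI := (s + a * Tmax / 2) / d + 1).
  assert (HMI : 0 < MI).
  { unfold MI. pose proof (Rdiv_lt_0_compat (s + a * Tmax / 2) d ltac:(nra) Hd). lra. }
  exists MI, (p * MI / c + 1).
  split; [exact HMI|]. split.
  { pose proof (Rdiv_lt_0_compat (p * MI) c ltac:(nra) Hc). lra. }
  intros T I V sol.
  destruct (infected_eventually_lt s d a Tmax b alpha mu p c tau T I V
    Hd Ha HT Hdmu Htau sol) as [t1 HI].
  destruct (virus_eventually_lt s d a Tmax b alpha mu p c tau T I V sol MI t1 Hc Hp HI)
    as [t2 HV].
  exists (Rmax t1 t2). intros t Ht.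
  pose proof (Rmax_l t1 t2). pose proof (Rmax_r t1 t2).
  split; [apply HI | apply HV]; lra.
Qed.
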